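(* Let $(I_t)_{t\in\mathbb{Z}}$ be a stochastic process such that there exists a family $(I_t^n)_{t\in\mathbb{Z}}$, $n\in\mathbb{N}$, of $\{0,1\}$-valued stationary stochastic processes with $P(I_0^n=1)>0$ for all $n$ and $$\mathcal{L}\bigl((I_t^n)_{t\in\{-u,\dots,v\}}\mid I_0^n=1\bigr)\Longrightarrow \mathcal{L}\bigl((I_t)_{t\in\{-u,\dots,v\}}\bigr)\quad (n\to\infty)$$ for all $u,v\in\mathbb{N}$. Define $S_+^i=\sum_{t=1}^\infty I_t\in\mathbb{N}_0\cup\{\infty\}$ and $S_-^i=\sum_{t=1}^\infty I_{-t}\in\mathbb{N}_0\cup\{\infty\}$. Then $$P(S_+^i\ge k,\ S_-^i\ge \ell)=P(S_+^i\ge k+\ell)=P(S_-^i\ge k+\ell),\qquad k,\ell\in\mathbb{N}_0.$$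
   Context: $\mathbb{N}_0=\{0,1,2,\dots\}$. $\mathcal{L}(\cdot\mid\cdot)$ denotes conditional law and $\Longrightarrow$ convergence in distribution. *)

From HB Require Import structures.
From mathcomp Require Import all_boot all_order all_algebra.
From mathcomp Require Import all_classical all_reals all_analysis.
Set Implicit Arguments. Unset Strict Implicit. Unset Printing Implicit Defensive.
Import Order.TTheory GRing.Theory Num.Theory.
Local Open Scope classical_set_scope.
Local Open Scope ring_scope.

Section Defs.
Context {R : realType} {d : measure_display} {T : measurableType d}.

(* A {0,1}-valued (i.e. bool-valued, true = 1) process indexed by Z,
   each coordinate being a random variable. *)
Definition binary_process (X : int -> T -> bool) : Prop :=
  forall t : int, measurable_fun setT (X t).

Definition stationary (P : probability T R) (X : int -> T -> bool) : Prop :=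
  forall (m : nat) (ts : 'I_m -> int) (b : 'I_m -> bool) (h : int),
    P [set w | forall i, X (ts i + h) w = b i] =
    P [set w | forall i, X (ts i) w = b i].

Definition window_event (X : int -> T -> bool) (u v : nat)
    (x : {ffun 'I_(u + v + 1) -> bool}) : set T :=
  [set w | forall i : 'I_(u + v + 1), X (i%:Z - u%:Z) w = x i].

Arguments window_event X u v x : clear implicits.

Definition window_pmf (P : probability T R) (X : int -> T -> bool) (u v : nat)
    (x : {ffun 'I_(u + v + 1) -> bool}) : R :=
  fine (P (window_event X u v x)).

Definition cond_window_pmf (P : probability T R) (X : int -> T -> bool)
    (u v : nat) (x : {ffun 'I_(u + v + 1) -> bool}) : R :=
  fine (P (window_event X u v x `&` [set w | X 0%R w])) /
  fine (P [set w | X 0%R w]).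

Definition S_plus (X : int -> T -> bool) (w : T) : \bar R :=
  (\sum_(0 <= k <oo) (((X (k.+1)%:Z w : nat)%:R : R)%:E))%E.

Definition S_minus (X : int -> T -> bool) (w : T) : \bar R :=
  (\sum_(0 <= k <oo) (((X (- (k.+1)%:Z) w : nat)%:R : R)%:E))%E.

End Defs.

(* Convergence in distribution of laws on a finite (discrete) space F,
   given by their mass functions: E_n[f] -> E[f] for every bounded
   continuous f, i.e. every f : F -> R since F is finite and discrete. *)
Definition conv_distr {R : realType} (F : finType) (pn : nat -> F -> R)
    (p : F -> R) : Prop :=
  forall f : F -> R,
    (fun n => \sum_(x : F) f x * pn n x) @ \oo --> \sum_(x : F) f x * p x.
Arguments window_pmf {R d T} P X u v x.
Arguments cond_window_pmf {R d T} P X u v x.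

From HB Require Import structures.
From mathcomp Require Import all_boot all_order all_algebra.
From mathcomp Require Import all_classical all_reals all_analysis.
From mathcomp Require Import zify.
Import Order.TTheory GRing.Theory Num.Theory.
Local Open Scope classical_set_scope.
Local Open Scope ring_scope.
Import numFieldNormedType.Exports.

(* Call t a hit of a path g : int -> bool when g t holds.  For a stationary
   process, shifting time by s+1 maps the event "0 is a hit and the l-th hit
   to the left of 0 is at -(s+1)" onto "0 is a hit and the l-th hit to the
   right of 0 is at s+1".  Summing over s, the probability of a hit at 0
   together with at least k hits in [1, N] and at least l hits in [-N, -1] is
   squeezed between those of a hit at 0 together with at least k + l hits in
   [1, N], resp. in [1, 2N].  These events only involve the window [-2N, 2N],
   so after division by P(hit at 0) the inequalities pass to the limit process
   through the convergence of the conditional window laws; letting N tend to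
   infinity gives P(S_+ >= k, S_- >= l) = P(S_+ >= k + l), and the case k = 0
   of this identity gives the second equality. *)

Section PathCounting.
Implicit Types (g : int -> bool) (k l n N s : nat).

Definition right_count g n : nat := (\sum_(i < n) g (i.+1)%:Z)%N.
Definition left_count g n : nat := right_count (fun t => g (- t)) n.
Definition count_from g (a : int) n : nat := (\sum_(i < n) g (a + i%:Z)%R)%N.

Lemma right_count0 g : right_count g 0 = 0%N.
Proof. exact: big_ord0. Qed.

Lemma right_countS g n : right_count g n.+1 = (right_count g n + g (n.+1)%:Z)%N.
Proof. exact: big_ord_recr. Qed.

Lemma right_countD g m n :
  right_count g (m + n) = (right_count g m + count_from g (m.+1)%:Z n)%N.
Proof.
by rewrite /right_count big_split_ord; congr (_ + _)%N.
Qed.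

Lemma leq_right_count g {m n} : (m <= n)%N -> (right_count g m <= right_count g n)%N.
Proof. by move=> /subnKC <-; rewrite right_countD leq_addr. Qed.

Lemma eq_right_count g1 g2 n :
  (forall t, 1 <= t <= n%:Z -> g1 t = g2 t) -> right_count g1 n = right_count g2 n.
Proof. by move=> h; apply: eq_bigr => i _; rewrite h //; have := ltn_ord i; lia. Qed.

Lemma eq_count_from g1 g2 a n :
  (forall t, a <= t < a + n%:Z -> g1 t = g2 t) -> count_from g1 a n = count_from g2 a n.
Proof. by move=> h; apply: eq_bigr => i _; rewrite h //; have := ltn_ord i; lia. Qed.

Lemma sum_first_passage (c : nat -> nat) (b : nat -> bool) l N :
  c 0%N = 0%N -> (forall s, c s.+1 = c s + b s)%N -> (0 < l)%N ->
  (\sum_(s < N) (b s && (c s == l.-1)) = (l <= c N))%N.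
Proof.
move=> c0 cS l_gt0; elim: N => [|N IH]; first by rewrite big_ord0 c0; case: l l_gt0.
by rewrite big_ord_recr /= IH cS; case: (b N); case: (leqP l (c N)) => /=; lia.
Qed.

Lemma sum_right_passage g l N : (0 < l)%N ->
  (\sum_(s < N) (g (s.+1)%:Z && (right_count g s == l.-1)) = (l <= right_count g N))%N.
Proof. exact: sum_first_passage (right_count0 g) (right_countS g). Qed.

End PathCounting.

Section HitEvents.
Implicit Types (g : int -> bool) (k l n N s : nat).

Definition right_hits n N g := (n <= right_count g N)%N.

Definition two_sided_hits k l N g :=
  (k <= right_count g N)%N && (l <= left_count g N)%N.

Definition lth_hit_left k l N s g :=
  [&& g 0%R, g (- (s.+1)%:Z), left_count g s == l.-1 & k <= right_count g N]%N.

Definition lth_hit_right k l N s g :=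
  [&& g 0%R, g (s.+1)%:Z, right_count g s == l.-1 & k <= count_from g (s.+2)%:Z N]%N.

Lemma lth_hit_left_shift k l N s g :
  lth_hit_left k l N s g = lth_hit_right k l N s (fun t => g (t - (s.+1)%:Z)).
Proof.
have rc_shift : right_count (fun t => g (t - (s.+1)%:Z)) s = left_count g s.
  rewrite /left_count /right_count (reindex_inj rev_ord_inj) /=.
  by apply: eq_bigr => i _; congr (nat_of_bool (g _)); have := ltn_ord i; lia.
have cf_shift : count_from (fun t => g (t - (s.+1)%:Z)) (s.+2)%:Z N = right_count g N.
  by apply: eq_bigr => i _; congr (nat_of_bool (g _)); lia.
rewrite /lth_hit_right rc_shift cf_shift sub0r subrr.
by rewrite /lth_hit_left andbCA.
Qed.

Variables (k l N : nat).
Hypothesis l_gt0 : (0 < l)%N.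

Lemma two_sided_hits_decomp g :
  (g 0 && two_sided_hits k l N g : nat) = (\sum_(s < N) lth_hit_left k l N s g)%N.
Proof.
have split_hit s : (lth_hit_left k l N s g : nat) =
    ((g 0 && (k <= right_count g N)%N : nat) *
     (g (- (s.+1)%:Z) && (left_count g s == l.-1) : nat))%N.
  by rewrite /lth_hit_left; do 2!case: (g _); case: (_ == _); case: (_ <= _)%N.
under eq_bigr => s _ do rewrite split_hit.
rewrite -big_distrr /=.
rewrite (@sum_right_passage (fun t => g (- t)) l N l_gt0) -/(left_count g N).
by rewrite /two_sided_hits; case: (g 0); case: (k <= _)%N; case: (l <= _)%N.
Qed.

Lemma lth_hit_right_of_hits g s :
  g 0 -> g (s.+1)%:Z -> right_count g s = l.-1 -> (k + l <= right_count g N)%N ->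
  lth_hit_right k l N s g.
Proof.
move=> g0 gs rcs hits; rewrite /lth_hit_right g0 gs rcs eqxx /=.
have := right_countD g s.+1 N; rewrite right_countS gs rcs.
have := leq_right_count g (leq_addl s.+1 N); lia.
Qed.

Lemma hits_of_lth_hit_right g s : (s < N)%N ->
  lth_hit_right k l N s g -> right_hits (k + l) (N + N) g.
Proof.
move=> s_lt /and4P[_ gs /eqP rcs hk]; rewrite /right_hits.
have := right_countD g s.+1 N; rewrite right_countS gs rcs.
have := leq_right_count g (_ : s.+1 + N <= N + N)%N; lia.
Qed.

Lemma right_hits_le_sum g :
  (g 0%R && right_hits (k + l) N g <= \sum_(s < N) lth_hit_right k l N s g)%N.
Proof.
case: (boolP (g 0 && _)) => //= /andP[g0 hits].
apply: (@leq_trans (\sum_(s < N) (g (s.+1)%:Z && (right_count g s == l.-1)))%N).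
  by rewrite sum_right_passage //; move: hits; rewrite /right_hits; lia.
apply: leq_sum => s _; case: (boolP (_ && _)) => //= /andP[gs /eqP rcs].
by rewrite lth_hit_right_of_hits.
Qed.

Lemma sum_le_right_hits g :
  (\sum_(s < N) lth_hit_right k l N s g <= g 0%R && right_hits (k + l) (N + N) g)%N.
Proof.
apply: (@leq_trans (\sum_(s < N) (g (s.+1)%:Z && (right_count g s == l.-1) : nat) *
                    (g 0%R && right_hits (k + l) (N + N) g : nat))%N); last first.
  by rewrite -big_distrl /= sum_right_passage //; case: (l <= _)%N; rewrite ?mul1n.
apply: leq_sum => s _.
case: (boolP (lth_hit_right k l N s g)) => // hit.
rewrite (hits_of_lth_hit_right _ _ (ltn_ord s) hit).
by case/and4P: hit => -> -> /eqP -> _; rewrite eqxx.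
Qed.

End HitEvents.

Definition local (M : nat) (F : (int -> bool) -> bool) :=
  forall g1 g2 : int -> bool,
    (forall t : int, - M%:Z <= t <= M%:Z -> g1 t = g2 t) -> F g1 = F g2.

Lemma local_le {M M' F} : (M <= M')%N -> local M F -> local M' F.
Proof. by move=> le_MM' lF g1 g2 eq_g; apply: lF => t ht; apply: eq_g; lia. Qed.

Lemma local_hit0 {M F} : local M F -> local M (fun g => g 0 && F g).
Proof. by move=> lF g1 g2 eq_g; rewrite (lF _ _ eq_g) eq_g //; lia. Qed.

Lemma local_right_hits n N : local N (right_hits n N).
Proof.
by move=> g1 g2 eq_g; rewrite /right_hits (eq_right_count g1 g2) // => t ht; apply: eq_g; lia.
Qed.

Lemma local_two_sided_hits k l N : local N (two_sided_hits k l N).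
Proof.
move=> g1 g2 eq_g; rewrite /two_sided_hits /left_count.
rewrite (eq_right_count g1 g2) ?(eq_right_count (fun t => g1 (- t)) (fun t => g2 (- t))) //.
  by move=> t ht; apply: eq_g; lia.
by move=> t ht; apply: eq_g; lia.
Qed.

Lemma local_lth_hit_left k l {N s} : (s < N)%N -> local N (lth_hit_left k l N s).
Proof.
move=> s_lt g1 g2 eq_g; rewrite /lth_hit_left /left_count.
rewrite (eq_right_count g1 g2) ?(eq_right_count (fun t => g1 (- t)) (fun t => g2 (- t))).
- by rewrite !eq_g //; lia.
- by move=> t ht; apply: eq_g; lia.
- by move=> t ht; apply: eq_g; lia.
Qed.

Lemma local_lth_hit_right k l {N s} : (s < N)%N -> local (N + N) (lth_hit_right k l N s).
Proof.
move=> s_lt g1 g2 eq_g; rewrite /lth_hit_right.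
rewrite (eq_right_count g1 g2) ?(eq_count_from g1 g2).
- by rewrite !eq_g //; lia.
- by move=> t ht; apply: eq_g; lia.
- by move=> t ht; apply: eq_g; lia.
Qed.

Lemma measure_bigsetU_fin d (T : ringOfSetsType d) (R : realFieldType)
    (mu : {content set T -> \bar R}) (I : finType) (p : pred I) (E : I -> set T) :
  (forall i, measurable (E i)) -> trivIset setT E ->
  mu (\big[setU/set0]_(i | p i) E i) = (\sum_(i | p i) mu (E i))%E.
Proof.
move=> mE tE; rewrite [in LHS](big_enum_val_cond (A := predT)).
rewrite [in RHS](big_enum_val_cond (A := predT)) measure_bigsetU_ord //.
rewrite -[X in trivIset _ X]/(E \o enum_val) trivIset_comp.
  exact: sub_trivIset tE.
by move=> i j _ _; apply: enum_val_inj.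
Qed.

Section PathEvents.
Context {R : realType} {d : measure_display} {T : measurableType d}.
Implicit Types (X : int -> T -> bool) (F : (int -> bool) -> bool) (M : nat).

Local Notation pattern M := {ffun 'I_(M + M + 1) -> bool}.

Definition path_event X F : set T := [set w | F (X^~ w)].

Definition window M X w : pattern M :=
  [ffun i : 'I_(M + M + 1) => X (i%:Z - M%:Z) w].

(* Coordinate i of a pattern stands for time i - M, as in [window_event];
   off the window the path is false. *)
Definition pattern_path {M} (x : pattern M) (t : int) : bool :=
  if (t + M%:Z)%R is Posz n then odflt false (omap x (insub n)) else false.

Lemma pattern_path_window M X w t :
  - M%:Z <= t <= M%:Z -> pattern_path (window M X w) t = X t w.
Proof.
move=> t_in; rewrite /pattern_path.
have : 0 <= t + M%:Z by lia.
case E: (t + M%:Z) => [n|//] _.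
have n_lt : (n < M + M + 1)%N by lia.
by rewrite insubT /= ffunE /=; congr X; lia.
Qed.

Lemma window_eventE M X (x : pattern M) : window_event X x = [set w | window M X w = x].
Proof.
apply/seteqP; split => w /=; last by move=> <- i; rewrite ffunE.
by move=> wx; apply/ffunP => i; rewrite ffunE wx.
Qed.

Lemma measurable_window_event M X (x : pattern M) :
  binary_process X -> measurable (window_event X x).
Proof.
move=> mX; have -> : window_event X x =
    \bigcap_(i in [set: 'I_(M + M + 1)]) (X (i%:Z - M%:Z) @^-1` [set x i]).
  by apply/seteqP; split => w /= wx i => [_|]; apply: wx.
apply: fin_bigcap_measurable => [|i _]; first exact: finite_finset.
by rewrite -[X _ @^-1` _]setTI; apply: mX.
Qed.

Lemma trivIset_window_event M X : trivIset setT (@window_event _ _ X M M).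
Proof.
apply/trivIsetP => x y _ _ neq_xy; apply/seteqP; split => // w [].
by rewrite !window_eventE /= => -> wy; rewrite wy eqxx in neq_xy.
Qed.

Lemma path_eventE X {M F} : local M F ->
  path_event X F = \big[setU/set0]_(x : pattern M | F (pattern_path x)) window_event X x.
Proof.
move=> lF; rewrite -bigcup_seq_cond; apply/seteqP; split => w /=.
  move=> Fw; exists (window M X w); last by rewrite window_eventE.
  rewrite /= mem_index_enum (lF _ (X^~ w)) //.
  by move=> t t_in; rewrite pattern_path_window.
move=> [x /= /andP[_ Fx]]; rewrite window_eventE /= => wx.
by rewrite /path_event /= (lF _ (pattern_path x)) // => t t_in; rewrite -wx pattern_path_window.
Qed.

Lemma measurable_path_event {X M F} :
  binary_process X -> local M F -> measurable (path_event X F).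
Proof.
move=> mX lF; rewrite (path_eventE X lF).
by apply: bigsetU_measurable => x _; apply: measurable_window_event.
Qed.

Lemma window_event_hit0 M X (x : pattern M) :
  window_event X x `&` [set w | X 0 w] =
  if pattern_path x 0 then window_event X x else set0.
Proof.
have zero_in : - M%:Z <= 0 <= M%:Z by lia.
apply/seteqP; split => w; rewrite window_eventE /=.
  by case=> <- X0; rewrite pattern_path_window // X0.
by case: ifP => // x0 wx; split => //; rewrite -(pattern_path_window _ _ _ _ zero_in) wx.
Qed.

Variable P : probability T R.

Definition path_prob X F : R := fine (P (path_event X F)).

Lemma measure_path_event {X M F} :
  binary_process X -> local M F -> P (path_event X F) = (path_prob X F)%:E.
Proof.
by move=> mX lF; rewrite fineK // fin_num_measure //; apply: measurable_path_event lF.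
Qed.

Lemma path_probE {X M F} : binary_process X -> local M F ->
  path_prob X F = \sum_(x : pattern M) (F (pattern_path x))%:R * window_pmf P X M M x.
Proof.
move=> mX lF; rewrite /path_prob (path_eventE X lF) measure_bigsetU_fin //.
- rewrite -sum_fine => [|x _]; last first.
    by rewrite fin_num_measure //; apply: measurable_window_event.
  rewrite big_mkcond /=; apply: eq_bigr => x _.
  by case: (F _); rewrite ?mul1r ?mul0r.
- by move=> x; apply: measurable_window_event.
- exact: trivIset_window_event.
Qed.

End PathEvents.

Section Stationarity.
Context {R : realType} {d : measure_display} {T : measurableType d}.
Context {P : probability T R} {X : int -> T -> bool}.
Hypotheses (mX : binary_process X) (stX : stationary P X).

Lemma path_prob_shift {M F} (h : int) : local M F ->
  path_prob P (fun t => X (t + h)) F = path_prob P X F.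
Proof.
move=> lF; rewrite (path_probE P (fun t => mX (t + h)) lF) (path_probE P mX lF).
apply: eq_bigr => x _; congr (_ * fine _).
exact: (stX (M + M + 1) (fun i : 'I_(M + M + 1) => i%:Z - M%:Z) x h).
Qed.

Lemma sum_path_prob {M N} {Fs : nat -> (int -> bool) -> bool} :
  (forall s, (s < N)%N -> local M (Fs s)) ->
  \sum_(s < N) path_prob P X (Fs s) =
  \sum_x (\sum_(s < N) Fs s (pattern_path x))%N%:R * window_pmf P X M M x.
Proof.
move=> lFs; under eq_bigr => s _ do rewrite (path_probE P mX (lFs s (ltn_ord s))).
by rewrite exchange_big; apply: eq_bigr => x _; rewrite natr_sum mulr_suml.
Qed.

Lemma path_prob_two_sided_hits_bounds k l N : (0 < l)%N ->
  path_prob P X (fun g => g 0 && right_hits (k + l) N g)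
  <= path_prob P X (fun g => g 0 && two_sided_hits k l N g)
  <= path_prob P X (fun g => g 0 && right_hits (k + l) (N + N) g).
Proof.
move=> l_gt0; have le_NN : (N <= N + N)%N by apply: leq_addr.
have lth_hit_sum : path_prob P X (fun g => g 0 && two_sided_hits k l N g) =
    \sum_(s < N) path_prob P X (lth_hit_right k l N s).
  transitivity (\sum_(s < N) path_prob P X (lth_hit_left k l N s)).
    rewrite (path_probE P mX (local_hit0 (local_two_sided_hits k l N))).
    rewrite (sum_path_prob (fun s => @local_lth_hit_left k l N s)).
    by apply: eq_bigr => x _; rewrite two_sided_hits_decomp.
  apply: eq_bigr => s _.
  rewrite -(path_prob_shift (- (s.+1)%:Z) (local_lth_hit_right k l (ltn_ord s))).
  by congr (fine (P _)); apply/seteqP; split => w; rewrite /path_event /= lth_hit_left_shift.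
rewrite lth_hit_sum (sum_path_prob (fun s => @local_lth_hit_right k l N s)).
rewrite (path_probE P mX (local_hit0 (local_le le_NN (local_right_hits (k + l) N)))).
rewrite (path_probE P mX (local_hit0 (local_right_hits (k + l) (N + N)))).
apply/andP; split; apply: ler_sum => x _; rewrite ler_wpM2r ?fine_ge0 // ler_nat.
  exact: right_hits_le_sum.
exact: sum_le_right_hits.
Qed.

End Stationarity.

Lemma le_measure_bigcup d (T : measurableType d) (R : realFieldType)
    (mu : {measure set T -> \bar R}) (A B : (set T)^nat) :
  (forall n, measurable (A n)) -> (forall n, measurable (B n)) -> nondecreasing_seq A ->
  (\forall n \near \oo, exists m, mu (A n) <= mu (B m))%E ->
  (mu (\bigcup_n A n) <= mu (\bigcup_n B n))%E.
Proof.
move=> mA mB ndA le_AB.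
have mUA : measurable (\bigcup_n A n) by apply: bigcup_measurable => n _.
have mUB : measurable (\bigcup_n B n) by apply: bigcup_measurable => n _.
apply: (lee_cvg_to (nondecreasing_cvg_mu mA mUA ndA) (cvg_cst _)).
apply: filterS le_AB => n [m le_ABm]; apply: (le_trans le_ABm).
by apply: le_measure; rewrite ?inE //; apply: bigcup_sup.
Qed.

Lemma ge_nneseries_nat (R : realType) (u : nat -> nat) (n : nat) :
  ((n%:R : R)%:E <= \sum_(0 <= i <oo) ((u i)%:R : R)%:E)%E <->
  exists N, (n <= \sum_(i < N) u i)%N.
Proof.
have partial_sum N : (\sum_(0 <= i < N) ((u i)%:R : R)%:E)%E = ((\sum_(i < N) u i)%N%:R)%:E.
  by rewrite big_mkord sumEFin natr_sum.
split => [le_n|[N le_nN]]; last first.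
  apply: le_trans (nneseries_lim_ge N _) => [|i _ _]; last by rewrite lee_fin.
  by rewrite partial_sum lee_fin ler_nat.
apply/not_existsP => small; have {}small N : (\sum_(i < N) u i < n)%N.
  by rewrite ltnNge; apply/negP => ?; apply: (small N).
have : (\sum_(0 <= i <oo) ((u i)%:R : R)%:E <= (n.-1%:R : R)%:E)%E.
  apply: lime_le; first by apply: is_cvg_nneseries => i _ _; rewrite lee_fin.
  by apply: nearW => N; rewrite partial_sum lee_fin ler_nat; have := small N; lia.
move/(le_trans le_n); rewrite lee_fin ler_nat; have := small 0%N; rewrite big_ord0; lia.
Qed.

Section TailEvents.
Context {R : realType} {d : measure_display} {T : measurableType d}.
Variable X : int -> T -> bool.

Lemma S_plus_geE n :
  [set w | ((n%:R : R)%:E <= S_plus X w)%E] = \bigcup_N path_event X (right_hits n N).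
Proof.
apply/seteqP; split => w; first by case/ge_nneseries_nat => N; exists N.
by case=> N _ hits; apply/ge_nneseries_nat; exists N.
Qed.

Lemma S_plus_minus_geE k l :
  [set w | ((k%:R : R)%:E <= S_plus X w)%E /\ ((l%:R : R)%:E <= S_minus X w)%E] =
  \bigcup_N path_event X (two_sided_hits k l N).
Proof.
apply/seteqP; split => w /=.
  case=> /ge_nneseries_nat[N1 hits1] /ge_nneseries_nat[N2 hits2].
  exists (maxn N1 N2) => //; apply/andP; split.
    exact: leq_trans hits1 (leq_right_count _ (leq_maxl _ _)).
  exact: leq_trans hits2 (leq_right_count _ (leq_maxr _ _)).
case=> N _ /andP[hits1 hits2].
by split; apply/ge_nneseries_nat; exists N.
Qed.

Lemma nondecreasing_right_hits n : nondecreasing_seq (fun N => path_event X (right_hits n N)).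
Proof.
move=> a b le_ab; apply/subsetPset => w hits.
exact: leq_trans hits (leq_right_count _ le_ab).
Qed.

Lemma nondecreasing_two_sided_hits k l :
  nondecreasing_seq (fun N => path_event X (two_sided_hits k l N)).
Proof.
move=> a b le_ab; apply/subsetPset => w /andP[hits1 hits2]; apply/andP; split.
  exact: leq_trans hits1 (leq_right_count _ le_ab).
exact: leq_trans hits2 (leq_right_count _ le_ab).
Qed.

End TailEvents.

Section ConditionalLimit.
Context {R : realType} {d : measure_display} {T : measurableType d}.
Context {P : probability T R} {I : int -> T -> bool}.
Context {dn : nat -> measure_display} {Tn : forall n, measurableType (dn n)}.
Context {Pn : forall n, probability (Tn n) R} {In : forall n, int -> Tn n -> bool}.
Hypotheses (mI : binary_process I) (mIn : forall n, binary_process (In n)).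
Hypothesis cond_window_cvg : forall u v : nat, (0 < u)%N -> (0 < v)%N ->
  conv_distr (fun n => cond_window_pmf (Pn n) (In n) u v) (window_pmf P I u v).

Lemma cond_path_prob_cvg {M F} : (0 < M)%N -> local M F ->
  (fun n => path_prob (Pn n) (In n) (fun g => g 0 && F g) /
            path_prob (Pn n) (In n) (fun g => g 0)) @ \oo --> (path_prob P I F : R).
Proof.
move=> M_gt0 lF; rewrite (path_probE P mI lF).
have -> : (fun n => path_prob (Pn n) (In n) (fun g => g 0 && F g) /
                    path_prob (Pn n) (In n) (fun g => g 0)) =
          (fun n => \sum_x (F (pattern_path x))%:R * cond_window_pmf (Pn n) (In n) M M x).
  apply/funext => n; rewrite (path_probE (Pn n) (mIn n) (local_hit0 lF)) big_distrl /=.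
  apply: eq_bigr => x _; rewrite /cond_window_pmf window_event_hit0 mulrA.
  by case: (pattern_path x 0); case: (F _); rewrite /= ?measure0 ?mul1r ?mul0r ?mulr0.
exact: cond_window_cvg.
Qed.

Lemma le_path_prob_of_cond {M F G} : (0 < M)%N -> local M F -> local M G ->
  (forall n, path_prob (Pn n) (In n) (fun g => g 0 && F g) <=
             path_prob (Pn n) (In n) (fun g => g 0 && G g)) ->
  path_prob P I F <= path_prob P I G.
Proof.
move=> M_gt0 lF lG le_FG.
apply: (ler_cvg_to (cond_path_prob_cvg M_gt0 lF) (cond_path_prob_cvg M_gt0 lG)).
by apply: nearW => n; rewrite ler_wpM2r ?invr_ge0 ?fine_ge0.
Qed.

Hypothesis stIn : forall n, stationary (Pn n) (In n).

Lemma path_prob_two_sided_hits_limit_bounds k l N : (0 < l)%N -> (0 < N)%N ->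
  path_prob P I (right_hits (k + l) N) <= path_prob P I (two_sided_hits k l N)
  <= path_prob P I (right_hits (k + l) (N + N)).
Proof.
move=> l_gt0 N_gt0; have NN_gt0 : (0 < N + N)%N by rewrite addn_gt0 N_gt0.
have le_NN : (N <= N + N)%N by apply: leq_addr.
have bounds n := path_prob_two_sided_hits_bounds (mIn n) (stIn n) k l N l_gt0.
apply/andP; split; apply: (le_path_prob_of_cond NN_gt0).
- exact: local_le le_NN (local_right_hits _ _).
- exact: local_le le_NN (local_two_sided_hits _ _ _).
- by move=> n; case/andP: (bounds n).
- exact: local_le le_NN (local_two_sided_hits _ _ _).
- exact: local_right_hits.
- by move=> n; case/andP: (bounds n).
Qed.


Lemma measure_two_sided_tail k l :
  P [set w | ((k%:R : R)%:E <= S_plus I w)%E /\ ((l%:R : R)%:E <= S_minus I w)%E] =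
  P [set w | (((k + l)%:R : R)%:E <= S_plus I w)%E].
Proof.
case: l => [|l].
  congr (P _); apply/seteqP; split => w /=; rewrite addn0; first by case.
  by split => //; apply: nneseries_ge0.
have mA N := measurable_path_event mI (local_two_sided_hits k l.+1 N).
have mB N := measurable_path_event mI (local_right_hits (k + l.+1) N).
rewrite S_plus_minus_geE S_plus_geE; apply/eqP; rewrite eq_le.
apply/andP; split; apply: le_measure_bigcup => //; 
  [exact: nondecreasing_two_sided_hits | | exact: nondecreasing_right_hits | ];
  exists 1%N => // N N_gt0 /=;
  have /andP[le_lower le_upper] := path_prob_two_sided_hits_limit_bounds k l.+1 N (ltn0Sn l) N_gt0.
- exists (N + N); rewrite (measure_path_event P mI (local_two_sided_hits _ _ _)).
  by rewrite (measure_path_event P mI (local_right_hits _ _)) lee_fin.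
- exists N; rewrite (measure_path_event P mI (local_two_sided_hits _ _ _)).
  by rewrite (measure_path_event P mI (local_right_hits _ _)) lee_fin.
Qed.

End ConditionalLimit.

Theorem proposition3p1 (R : realType)
    (d : measure_display) (T : measurableType d) (P : probability T R)
    (I : int -> T -> bool)
    (dn : nat -> measure_display) (Tn : forall n, measurableType (dn n))
    (Pn : forall n, probability (Tn n) R)
    (In : forall n, int -> Tn n -> bool) :
  binary_process I ->
  (forall n, binary_process (In n)) ->
  (forall n, stationary (Pn n) (In n)) ->
  (forall n, (0 < Pn n [set w | In n 0%R w])%E) ->
  (forall u v : nat, (0 < u)%N -> (0 < v)%N ->
     conv_distr (fun n => cond_window_pmf (Pn n) (In n) u v)
                (window_pmf P I u v)) ->
  forall k l : nat,
    P [set w | ((k%:R : R)%:E <= S_plus I w)%E /\ ((l%:R : R)%:E <= S_minus I w)%E]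
      = P [set w | (((k + l)%:R : R)%:E <= S_plus I w)%E]
    /\ P [set w | (((k + l)%:R : R)%:E <= S_plus I w)%E]
      = P [set w | (((k + l)%:R : R)%:E <= S_minus I w)%E].
Proof.
move=> mI mIn stIn _ cond_cvg k l.
have tail := measure_two_sided_tail mI mIn cond_cvg stIn.
split; first exact: tail.
have := tail 0%N (k + l)%N; rewrite add0n => <-.
congr (P _); apply/seteqP; split => w /=; first by case.
by split => //; apply: nneseries_ge0.
Qed.
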